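(* Let $r\in\mathbb{N}$, $w,v\in\mathbb{YF}^r$ and $l\in\mathbb{N}_0$ with $h(w,v)\ge l$. Then $$d_r(w,v,l)=d_1(s(w),s(v),l)\cdot r^{\#v-\#w-e(v[l])}.$$
   Context: Fix $r\in\mathbb{N}$. Words and statistics. Consider finite words over $\{1_1,\dots,1_r,2\}$. A letter $1_i$ is a one with digit value $1$; $2$ is a two with digit value $2$. $|x|$ is the sum of digit values, $\#x$ the number of letters, $e(x)$ the number of ones. The graph $\mathbb{YF}^r$. It is the graded graph on all finite words, graded by $|\cdot|$. From $x$ there is a downward edge to every word obtained by one of two operations: (i) delete the leftmost one; (ii) replace a $2$ lying left of the leftmost one (any $2$ if there are no ones) by $1_i$, with arbitrary $i$. For $r=1$ write $1$ for $1_1$; $\mathbb{YF}=\mathbb{YF}^1$. The map $s$ replaces every $1_i$ by $1$. Suffix notation. $h(w,v)$ is the number of letters of the longest common suffix of $w$ and $v$; $1_i\ne 1_j$ for $i\ne j$. $x[l]$ is $x$ with its last $l$ letters deleted. The restricted path count $d_r(x,y,l)$. For $x,y\in\mathbb{YF}^r$ with $h(x,y)\ge l$, let $u$ be their common suffix of $l$ letters, so $x=x'u$ and $y=y'u$. Then $d_r(x,y,l)$ is the number of downward paths in $\mathbb{YF}^r$ of the form $y=y_nu\to y_{n-1}u\to\dots\to y_mu=x$ with $|y_i|=i$ such that the words $y_i$ ($m\le i\le n$) do not all end with one and the same letter. $d_1(\cdot,\cdot,l)$ is the analogous count in $\mathbb{YF}$. *)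

From mathcomp Require Import all_boot all_order all_algebra.
Set Implicit Arguments. Unset Strict Implicit. Unset Printing Implicit Defensive.

(* Letters of YF^r: [Some i] is the one 1_{i+1} (0 <= i < r), [None] is the two 2. *)
Definition letter := option nat.
Definition word := seq letter.
Definition two : letter := None.
Definition oneL (i : nat) : letter := Some i.

Definition is_one (a : letter) : bool := if a is Some _ then true else false.
Definition digit (a : letter) : nat := if a is Some _ then 1 else 2.

Definition weight (x : word) : nat := sumn (map digit x).
Definition nletters (x : word) : nat := size x.
Definition e (x : word) : nat := count is_one x.

(* x is a vertex of YF^r : every one has index < r *)
Definition wordr (r : nat) (x : word) : bool :=
  all (fun a => if a is Some i then i < r else true) x.

Definition s (x : word) : word := map (fun a => if a is Some _ then oneL 0 else two) x.

(* downward neighbours of x in YF^r: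
   (i) delete the leftmost one;
   (ii) replace a 2 lying left of the leftmost oneL (any 2 if no ones) by 1_i. *)
Definition down (r : nat) (x : word) : seq word :=
  let j0 := find is_one x in
  (if j0 < size x then [:: take j0 x ++ drop j0.+1 x] else [::]) ++
  [seq set_nth two x j (oneL i)
     | j <- [seq j <- iota 0 j0 | nth two x j == two], i <- iota 0 r].

Definition edge (r : nat) (x y : word) : bool := y \in down r x.

Fixpoint lcp (a b : word) : nat :=
  match a, b with
  | x :: a', y :: b' => if x == y then (lcp a' b').+1 else 0
  | _, _ => 0
  end.
Definition h (w v : word) : nat := lcp (rev w) (rev v).

Definition cut (x : word) (l : nat) : word := take (size x - l) x.

Definition nexts (r : nat) (u z : word) : seq word :=
  [seq take (size y - size u) y | y <- down r (z ++ u) & drop (size y - size u) y == u].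

Fixpoint pathsk (r : nat) (u : word) (k : nat) (z : word) : seq (seq word) :=
  match k with
  | 0 => [:: [:: z]]
  | k'.+1 => [seq z :: p | z' <- nexts r u z, p <- pathsk r u k' z']
  end.

Definition ends_with (a : letter) (w : word) : bool := (w != [::]) && (last two w == a).

Definition same_end (p : seq word) : bool :=
  if p is z :: _ then (z != [::]) && all (ends_with (last two z)) p else true.

(* d_r(x,y,l): number of downward paths y'u -> ... -> x'u in YF^r, u the common
   suffix of l letters, such that the y_i do not all end with the same letter. *)
Definition d (r : nat) (x y : word) (l : nat) : nat :=
  let u := drop (size y - l) y in
  let x' := cut x l in
  let y' := cut y l in
  size (undup [seq p <- pathsk r u (weight y' - weight x') y'
               | (last y' p == x') && ~~ same_end p]).

From mathcomp Require Import all_boot all_order all_algebra zify.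
Import GRing.Theory Num.Theory.
Set Implicit Arguments. Unset Strict Implicit. Unset Printing Implicit Defensive.

(* The projection [s] maps paths of YF^r onto paths of YF. Call a path free if
   one of its words has no one. Along a free path from z to x every one of z is
   deleted, and every one created on the way is either deleted later (its index
   is then arbitrary among r) or survives into x (its index is then forced by x).
   So free paths of YF^r from z to x are r ^ (#z - #x - e z) times as many as free
   paths of YF from s z to s x. This goes by induction on the length; from a
   one-free word, the first step creates a one 1_i, and a path that never becomes
   one-free again keeps the suffix starting at 1_i, so it is a path of the prefix.
   A path whose words do not all end with the same letter must delete the last
   one of its first word, hence is free; a free path whose words all end alike
   starts at a word ending with 2, and is a path of that word with the 2 removed.
   Finally, the paths y_i u with u fixed are exactly the paths y_i. *)

Lemma catIs (T : Type) (u : seq T) : injective (cat^~ u).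
Proof.
elim/last_ind: u => [|u x IH] a b /= e; first by rewrite -(cats0 a) e cats0.
by apply: IH; apply: (@rcons_injl _ x); rewrite /= !rcons_cat.
Qed.

Lemma set_nth_cat (T : Type) (x0 : T) s1 s2 n y : set_nth x0 (s1 ++ s2) n y =
  if n < size s1 then set_nth x0 s1 n y ++ s2 else s1 ++ set_nth x0 s2 (n - size s1) y.
Proof.
elim: s1 n => [|x s1 IH] [|n] /=; rewrite ?subn0 //.
by rewrite IH ltnS subSS; case: ifP.
Qed.

Lemma count_andl (T : Type) (b : bool) (P : pred T) s :
  count (fun x => b && P x) s = b * count P s.
Proof. by case: b; rewrite /= ?mul1n ?count_pred0. Qed.

Lemma count_split (T : Type) (P Q : pred T) s :
  count P s = count (fun x => P x && Q x) s + count (fun x => P x && ~~ Q x) s.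
Proof. by elim: s => //= x s ->; case: (P x); case: (Q x); rewrite /= ?addnS. Qed.

Lemma sum_iota_mul_eq (f : nat -> nat) r a b : 0 < r ->
  (forall i, i < r -> f i * (a * r) = b) -> (\sum_(i <- iota 0 r) f i) * a = b.
Proof.
move=> hr hf; apply/eqP; rewrite -(eqn_pmul2l hr) mulnC -mulnA big_distrl /=.
rewrite (eq_big_seq (fun _ => b)) => [|i]; last by rewrite mem_iota => /andP[_ /hf].
by rewrite big_const_seq count_predT size_iota iter_addn_0 mulnC.
Qed.

(** * Downward edges *)

Definition onefree (z : word) : bool := ~~ has is_one z.

Definition del_one (z : word) : word :=
  take (find is_one z) z ++ drop (find is_one z).+1 z.

Lemma onefree_cat (a b : word) : onefree (a ++ b) = onefree a && onefree b.
Proof. by rewrite /onefree has_cat negb_or. Qed.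

Lemma ltn_find_size (z : word) j : j < find is_one z -> j < size z.
Proof. by move/leq_trans; apply; apply: find_size. Qed.

Lemma nth_before_one (z : word) j : j < find is_one z -> nth two z j = two.
Proof. by move/(before_find two); case: nth. Qed.

Lemma size_set_nth_in (z : word) j a : j < size z -> size (set_nth two z j a) = size z.
Proof. by move=> h; rewrite size_set_nth; apply/maxn_idPr. Qed.

Lemma size_del_one z : has is_one z -> size (del_one z) = (size z).-1.
Proof. by rewrite has_find => hf; rewrite /del_one size_cat size_take size_drop hf; lia. Qed.

Lemma del_one_cons a z : del_one (a :: z) = if is_one a then z else a :: del_one z.
Proof. by case: a => [i|]; rewrite /del_one /= ?drop0. Qed.

Lemma del_one_catl B u : has is_one B -> del_one (B ++ u) = del_one B ++ u.
Proof.
elim: B => //= a B IH; rewrite !del_one_cons.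
by case: (is_one a) => //= /IH ->.
Qed.

Lemma del_one_catr B u : onefree B -> del_one (B ++ u) = B ++ del_one u.
Proof.
elim: B => //= a B IH; rewrite /onefree /= negb_or del_one_cons.
by case/andP => /negbTE -> /IH ->.
Qed.

Lemma find_del_one u : has is_one u -> find is_one u <= find is_one (del_one u).
Proof.
move=> hu; have hf : find is_one u < size u by rewrite -has_find.
by rewrite /del_one find_cat has_take // ltnn /= size_take hf leq_addr.
Qed.

Lemma down_eq r z : down r z = (if has is_one z then [:: del_one z] else [::]) ++
  [seq set_nth two z j (oneL i) | j <- iota 0 (find is_one z), i <- iota 0 r].
Proof.
rewrite /down -has_find; congr (_ ++ allpairs_dep _ _ _).
apply/all_filterP/allP => j; rewrite mem_iota => /andP[_ hj].
by rewrite nth_before_one.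
Qed.

Lemma downP r z y : reflect
  ((has is_one z /\ y = del_one z) \/
   exists j i, [/\ j < find is_one z, i < r & y = set_nth two z j (oneL i)])
  (y \in down r z).
Proof.
rewrite down_eq mem_cat; apply: (iffP orP).
  case; first by case: ifP => // hz; rewrite inE => /eqP ->; left.
  case/allpairsPdep => j [i [hj hi ->]]; right; exists j, i.
  by move: hj hi; rewrite !mem_iota => /andP[_ ->] /andP[_ ->].
case=> [[hz ->]|[j [i [hj hi ->]]]]; first by rewrite hz mem_head; left.
by right; apply/allpairsPdep; exists j, i; rewrite !mem_iota hj hi.
Qed.

Lemma sum_down r z (F : word -> nat) : \sum_(y <- down r z) F y =
  (if has is_one z then F (del_one z) else 0) +
  \sum_(j <- iota 0 (find is_one z)) \sum_(i <- iota 0 r) F (set_nth two z j (oneL i)).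
Proof.
rewrite down_eq big_cat big_allpairs_dep /=; congr (_ + _).
by case: ifP; rewrite ?big_seq1 ?big_nil.
Qed.

Lemma down_one_cons r i T : down r (oneL i :: T) = [:: T].
Proof. by rewrite /down /= drop0. Qed.

Lemma notin_down r z : z \notin down r z.
Proof.
apply/negP => /downP [[hz /(congr1 size)]|[j [i [hj _ /(congr1 (nth two ^~ j))]]]].
  by rewrite size_del_one //; move: hz; rewrite has_find; lia.
by rewrite nth_set_nth /= eqxx nth_before_one.
Qed.

Lemma down_uniq r z : uniq (down r z).
Proof.
rewrite down_eq cat_uniq; apply/and3P; split; first by case: ifP.
  case: ifP => hz; apply/hasPn => y /allpairsPdep [j [i [hj _ ->]]] //.
  rewrite inE; apply/eqP => /(congr1 size).
  rewrite size_del_one // size_set_nth_in; first by move: hz; rewrite has_find; lia.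
  by move: hj; rewrite mem_iota => /andP[_ /ltn_find_size].
apply: allpairs_uniq => [||[j i] [j' i']]; rewrite ?iota_uniq //.
move=> /allpairsPdep [{}j [{}i [hj _ [-> ->]]]] /allpairsPdep [{}j' [{}i' [_ _ [-> ->]]]].
move/(congr1 (nth two ^~ j)); rewrite !nth_set_nth /= eqxx.
case: eqP => [-> [->] //|_]; rewrite nth_before_one //.
by move: hj; rewrite mem_iota.
Qed.

Lemma down_cat r (B u y : word) : y \in down r (B ++ u) ->
  (exists2 B' : word, B' \in down r B & y = B' ++ u) \/
  (onefree B /\ exists2 u' : word, u' \in down r u & y = B ++ u').
Proof.
case/downP => [[hz ->]|[j [i [hj hi ->]]]].
  case hB: (has is_one B).
    by left; exists (del_one B); [apply/downP; left | rewrite del_one_catl].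
  have hu : has is_one u by move: hz; rewrite has_cat hB.
  right; split; first by rewrite /onefree hB.
  by exists (del_one u); [apply/downP; left | rewrite del_one_catr /onefree ?hB].
rewrite set_nth_cat; move: hj; rewrite find_cat; case hB: (has is_one B) => hj.
  by rewrite ltn_find_size //; left; eexists; [apply/downP; right; exists j, i | ].
case: ltnP => hjB.
  by left; eexists; [apply/downP; right; exists j, i; rewrite hasNfind ?hB | ].
right; split; first by rewrite /onefree hB.
by eexists; [apply/downP; right; exists (j - size B), i; split => //; lia | ].
Qed.

Lemma down_catr r (B u B' : word) : B' \in down r B -> B' ++ u \in down r (B ++ u).
Proof.
case/downP=> [[hB ->]|[j [i [hj hi ->]]]]; apply/downP.
  by left; rewrite del_one_catl // has_cat hB.
right; exists j, i; rewrite set_nth_cat (ltn_find_size hj) find_cat; split=> //.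
by case: ifP => // _; apply/ltn_addr/ltn_find_size.
Qed.

Lemma down_cat2r r (B u B' : word) : (B' ++ u \in down r (B ++ u)) = (B' \in down r B).
Proof.
apply/idP/idP => [|]; last exact: down_catr.
case/down_cat => [[B'' hB'' /catIs ->] //|[hB [u' hu' e]]]; exfalso.
case/downP: hu' e => [[hu ->] e|[j [i [hj hi ->]] e]].
  have hsz : size B' + size u = size B + (size u).-1.
    by rewrite -size_del_one // -!size_cat e.
  have hfu : find is_one u < size u by rewrite -has_find.
  have /(congr1 (find is_one)) := e; rewrite [RHS]find_cat (negbTE hB) /= find_cat.
  have := find_del_one hu; case: ifP => [hB'|_]; last lia.
  by move: hB'; rewrite has_find; lia.
have /(congr1 size) := e; rewrite !size_cat size_set_nth_in ?ltn_find_size // => /addIn hsz.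
move/eqP: e; rewrite eqseq_cat // => /andP[_ /eqP eu].
by case/negP: (notin_down r u); rewrite {1}eu; apply/downP; right; exists j, i.
Qed.

(** * Paths *)

Definition paths r k z := pathsk r [::] k z.

Lemma nexts_nil r z : nexts r [::] z = down r z.
Proof.
rewrite /nexts cats0; elim: (down r z) => //= y s IH.
by rewrite {1}subn0 drop_size eqxx /= subn0 take_size IH.
Qed.

Lemma nexts_mem r u z : nexts r u z =i down r z.
Proof.
move=> y; apply/mapP/idP => [[y' + ->]|hy].
  rewrite mem_filter => /andP[/eqP hu].
  by rewrite -{1}(cat_take_drop (size y' - size u) y') hu down_cat2r.
exists (y ++ u); last by rewrite size_cat addnK take_size_cat.
by rewrite mem_filter down_cat2r hy size_cat addnK drop_size_cat ?eqxx.
Qed.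

Lemma pathsS r k z :
  paths r k.+1 z = [seq z :: p | y <- down r z, p <- paths r k y].
Proof. by rewrite /paths /= nexts_nil. Qed.

Lemma pathsk_mem r u k z : pathsk r u k z =i paths r k z.
Proof.
elim: k z => [|k IH] z //; rewrite pathsS /=.
by apply: mem_allpairs_dep => [y|y _]; rewrite ?nexts_mem ?IH.
Qed.

Lemma paths_head r k z p : p \in paths r k z -> exists p', p = z :: p'.
Proof.
case: k => [|k]; first by rewrite inE => /eqP ->; exists [::].
by rewrite pathsS => /allpairsPdep [y [p' [_ _ ->]]]; exists p'.
Qed.

Lemma last_paths r k z p (a b : word) : p \in paths r k z -> last a p = last b p.
Proof. by case/paths_head => p' ->. Qed.

Lemma paths_uniq r k z : uniq (paths r k z).
Proof.
elim: k z => [|k IH] z //; rewrite pathsS.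
apply: allpairs_uniq_dep => [||[y p] [y' p']]; rewrite ?down_uniq //.
move=> /allpairsPdep [x [q [_ /paths_head [q1 ->] [-> ->]]]].
by move=> /allpairsPdep [x' [q' [_ /paths_head [q1' ->] [-> ->]]]] /= [-> ->].
Qed.

Lemma count_pathsS r k z (P : pred (seq word)) : count P (paths r k.+1 z) =
  \sum_(y <- down r z) count (fun p => P (z :: p)) (paths r k y).
Proof.
rewrite pathsS count_flatten sumnE !big_map; apply: eq_bigr => y _.
by rewrite count_map.
Qed.

Lemma count_paths_nil r k z (P : pred (seq word)) :
  (forall p, P (z :: p) = false) -> count P (paths r k z) = 0.
Proof.
move=> hP; rewrite -(count_pred0 (paths r k z)).
by apply: eq_in_count => p /paths_head [p' ->]; rewrite hP.
Qed.

Lemma count_paths_suffix r k B u (P : pred (seq word)) :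
  count (fun p => all (suffix u) p && P p) (paths r k (B ++ u)) =
  count (fun p => P (map (cat^~ u) p)) (paths r k B).
Proof.
elim: k B P => [|k IH] B P /=; first by rewrite suffix_suffix.
rewrite !count_pathsS (bigID (suffix u)) /= [X in _ + X]big1 ?addn0; last first.
  by move=> y hy; apply: count_paths_nil => p /=; rewrite (negbTE hy) andbF.
have down_suffix : perm_eq [seq y <- down r (B ++ u) | suffix u y] (map (cat^~ u) (down r B)).
  apply: uniq_perm; first by rewrite filter_uniq ?down_uniq.
    by rewrite (map_inj_uniq (@catIs _ u)) down_uniq.
  move=> y; rewrite mem_filter; apply/andP/mapP => [[/suffixP [y' ->] hy]|[y' hy' ->]].
    by exists y'; rewrite // -(down_cat2r r B u).
  by rewrite suffix_suffix down_cat2r.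
rewrite -big_filter (perm_big _ down_suffix) big_map; apply: eq_bigr => B' _.
rewrite -(IH B' (fun p => P ((B ++ u) :: p))).
by apply: eq_count => p /=; rewrite suffix_suffix.
Qed.

(** * Statistics of words and the projection s *)

Lemma s_cat (a b : word) : s (a ++ b) = s a ++ s b.
Proof. exact: map_cat. Qed.

Lemma size_s z : size (s z) = size z.
Proof. exact: size_map. Qed.

Lemma take_s n z : take n (s z) = s (take n z).
Proof. by rewrite /s map_take. Qed.

Lemma cut_s z l : cut (s z) l = s (cut z l).
Proof. by rewrite /cut size_s take_s. Qed.

Lemma weight_s z : weight (s z) = weight z.
Proof. by rewrite /weight -map_comp; congr sumn; apply: eq_map => -[]. Qed.

Lemma has_one_s z : has is_one (s z) = has is_one z.
Proof. by rewrite has_map; apply: eq_has => -[]. Qed.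

Lemma onefree_s z : onefree (s z) = onefree z.
Proof. by rewrite /onefree has_one_s. Qed.

Lemma find_s z : find is_one (s z) = find is_one z.
Proof. by rewrite find_map; apply: eq_find => -[]. Qed.

Lemma del_one_s z : del_one (s z) = s (del_one z).
Proof. by rewrite /del_one find_s /s map_cat map_take map_drop. Qed.

Lemma set_nth_s z j i : s (set_nth two z j (oneL i)) = set_nth two (s z) j (oneL 0).
Proof. by elim: z j => [|a z IH] [|j] //=; [elim: j => //= j -> | rewrite IH]. Qed.

Lemma s_onefree z : onefree z -> s z = z.
Proof. by elim: z => [|[i|] z IH] //= hz; rewrite IH. Qed.

Lemma eq_s_onefree z x : onefree z -> (z == s x) = (z == x).
Proof.
move=> hz; apply/eqP/eqP => [ezx|<-]; last by rewrite s_onefree.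
by rewrite ezx s_onefree // -onefree_s -ezx.
Qed.

Lemma e_cat (a b : word) : e (a ++ b) = e a + e b.
Proof. exact: count_cat. Qed.

Lemma e_eq0 z : (e z == 0) = onefree z.
Proof. by rewrite /onefree has_count lt0n negbK. Qed.

Lemma e_onefree z : onefree z -> e z = 0.
Proof. by rewrite -e_eq0 => /eqP. Qed.

Lemma e_del_one z : has is_one z -> e (del_one z) = (e z).-1.
Proof.
move=> hz; have hf : find is_one z < size z by rewrite -has_find.
rewrite /e -{2}(cat_take_drop (find is_one z) z) (drop_nth two hf) /del_one.
by rewrite !count_cat /= nth_find // add1n addnS.
Qed.

Lemma e_set_nth z j i : j < find is_one z -> e (set_nth two z j (oneL i)) = (e z).+1.
Proof.
move=> hj; rewrite /e count_set_nth_ltn ?ltn_find_size //.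
by rewrite nth_before_one // addn1 subn0.
Qed.

Lemma wordr_cat r (a b : word) : wordr r (a ++ b) = wordr r a && wordr r b.
Proof. exact: all_cat. Qed.

Lemma wordr_take r n x : wordr r x -> wordr r (take n x).
Proof. by move=> /allP hx; apply/allP => a /mem_take /hx. Qed.

Lemma wordr_drop r n x : wordr r x -> wordr r (drop n x).
Proof. by move=> /allP hx; apply/allP => a /mem_drop /hx. Qed.

Lemma wordr_onefree r z : onefree z -> wordr r z.
Proof. by elim: z => [|[i|] z IH] //= hz; rewrite IH. Qed.

Lemma wordr_down r z y : wordr r z -> y \in down r z -> wordr r y.
Proof.
move=> hz /downP [[_ ->]|[j [i [hj hi ->]]]].
  by rewrite wordr_cat wordr_take ?wordr_drop.
by rewrite set_nthE ltn_find_size // wordr_cat wordr_take //= hi wordr_drop.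
Qed.

(** * Counting free paths *)

Definition npaths r k z x := count (fun p => last [::] p == x) (paths r k z).
Definition nfree r k z x := count (fun p => (last [::] p == x) && has onefree p) (paths r k z).

Lemma npathsS r k z x : npaths r k.+1 z x = \sum_(y <- down r z) npaths r k y x.
Proof.
rewrite /npaths count_pathsS; apply: eq_bigr => y _; apply: eq_in_count => p hp /=.
by rewrite (last_paths z [::] hp).
Qed.

Lemma nfreeS r k z x : ~~ onefree z -> nfree r k.+1 z x = \sum_(y <- down r z) nfree r k y x.
Proof.
move=> hz; rewrite /nfree count_pathsS; apply: eq_bigr => y _; apply: eq_in_count => p hp /=.
by rewrite (last_paths z [::] hp) (negbTE hz).
Qed.

Lemma nfree_onefree r k z x : onefree z -> nfree r k z x = npaths r k z x.
Proof. by move=> hz; apply: eq_in_count => p /paths_head [p' ->] /=; rewrite hz andbT. Qed.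

(* The last one of a word can only be deleted when it is the only one left,
   and this produces a one-free word. *)
Lemma avoid_onefree_suffix r k i (B T : word) p : onefree T ->
  p \in paths r k (B ++ oneL i :: T) -> ~~ has onefree p -> all (suffix (oneL i :: T)) p.
Proof.
move=> hT; elim: k B p => [|k IH] B p.
  by rewrite inE => /eqP -> _ /=; rewrite suffix_suffix.
rewrite pathsS => /allpairsPdep [y [p' [hy hp' ->]]].
rewrite /= negb_or suffix_suffix => /andP[_ hp'0].
case/down_cat: hy => [[B' hB' ey]|[hB [u']]]; first by apply: (IH B'); rewrite -?ey.
rewrite down_one_cons inE => /eqP -> ey; case/paths_head: hp' hp'0 => q ->.
by rewrite /= ey onefree_cat hB hT.
Qed.

Lemma cat_eq_cut (a u x : word) :
  (a ++ u == x) = (x == cut x (size u) ++ u) && (a == cut x (size u)).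
Proof.
apply/eqP/andP => [<-|[/eqP hx /eqP ->]]; last by rewrite -hx.
by rewrite /cut size_cat addnK take_size_cat.
Qed.

Lemma eq_cut_cat x (D : word) : (x == cut x (size D) ++ D) = (drop (size x - size D) x == D).
Proof. by rewrite -{1}(cat_take_drop (size x - size D) x) eqseq_cat // eqxx. Qed.

Lemma sum_eq_one_cons r (D T : word) : wordr r D -> onefree T ->
  \sum_(i <- iota 0 r) (D == oneL i :: T : nat) = (s D == oneL 0 :: T).
Proof.
case: D => [|a D] hD hT; first by rewrite big1.
have hDT : (s D == T) = (D == T) by rewrite eq_sym eq_s_onefree // eq_sym.
rewrite /= eqseq_cons hDT; under eq_bigr do rewrite eqseq_cons.
case: (D == T); last by rewrite andbF big1 // => i _; rewrite andbF.
case: a hD => [i0|] /= hD; last by rewrite big1.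
have hi0 : i0 \in iota 0 r by rewrite mem_iota; case/andP: hD.
rewrite (bigD1_seq i0) ?iota_uniq //= eqxx big1 // => i hi.
by case: eqP => // -[ei]; rewrite ei eqxx in hi.
Qed.

Lemma sum_eq_cut_one r x (T : word) : wordr r x -> onefree T ->
  \sum_(i <- iota 0 r) (x == cut x (size T).+1 ++ oneL i :: T : nat) =
  (s x == cut (s x) (size T).+1 ++ oneL 0 :: T).
Proof.
move=> hx hT; rewrite (eq_cut_cat _ (oneL 0 :: T)) size_s /s -map_drop -/(s _).
under eq_bigr do rewrite (eq_cut_cat _ (oneL _ :: T)).
exact: (sum_eq_one_cons (wordr_drop (size x - (size T).+1) hx) hT).
Qed.

Lemma npaths_avoid_onefree r k i (B T : word) x : onefree T ->
  count (fun p => (last [::] p == x) && ~~ has onefree p) (paths r k (B ++ oneL i :: T)) =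
  (x == cut x (size T).+1 ++ oneL i :: T) * npaths r k B (cut x (size T).+1).
Proof.
move=> hT; rewrite (eq_in_count (a2 := fun p => all (suffix (oneL i :: T)) p &&
    ((last [::] p == x) && ~~ has onefree p))); last first.
  move=> p hp /=; case h0: (has onefree p); rewrite ?andbF //= andbT.
  by rewrite (avoid_onefree_suffix hT hp) ?h0.
rewrite count_paths_suffix /npaths -count_andl; apply: eq_in_count => p /paths_head [p' ->].
have -> : has onefree (map (cat^~ (oneL i :: T)) (B :: p')) = false.
  by apply/hasPn => w /mapP [w' _ ->]; rewrite /onefree has_cat /= orbT.
by rewrite andbT /= (last_map (cat^~ _)) cat_eq_cut.
Qed.

(* [nfree r k z x = r ^ (#z - #x - e z) * nfree 1 k (s z) (s x)], multiplied out
   to avoid truncated subtraction. *)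
Definition free_scaling r k := forall z x, wordr r z -> wordr r x ->
  nfree r k z x * r ^ (size x + e z) = r ^ size z * nfree 1 k (s z) (s x).

Section FreeScaling.

Variable r : nat.
Hypothesis r_gt0 : 0 < r.

Lemma free_scaling0 : free_scaling r 0.
Proof.
move=> z x _ _; rewrite /nfree /= !addn0 !orbF onefree_s.
have [hz|] := boolP (onefree z); rewrite ?andbF ?muln0 // !andbT e_onefree //.
by rewrite s_onefree // eq_s_onefree // addn0; case: eqP => [->|]; rewrite /= ?mul1n ?muln1 ?muln0.
Qed.

Section Step.

Variable k : nat.
Hypothesis IH : free_scaling r k.

Lemma npaths_scaling z x : onefree z -> wordr r x ->
  npaths r k z x * r ^ size x = r ^ size z * npaths 1 k z (s x).
Proof.
move=> hz hx; have := IH (wordr_onefree r hz) hx.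
by rewrite (s_onefree hz) !nfree_onefree ?onefree_s // e_onefree // addn0.
Qed.

Lemma npaths_scaling_one_cons (B T : word) x : onefree B -> onefree T -> wordr r x ->
  (\sum_(i <- iota 0 r) npaths r k (B ++ oneL i :: T) x) * r ^ size x =
  r ^ size (B ++ oneL 0 :: T) * npaths 1 k (B ++ oneL 0 :: T) (s x).
Proof.
move=> hB hT hx; set n := (size T).+1.
have split_free r' i y : npaths r' k (B ++ oneL i :: T) y = nfree r' k (B ++ oneL i :: T) y +
    (y == cut y n ++ oneL i :: T) * npaths r' k B (cut y n).
  by rewrite -npaths_avoid_onefree // /npaths /nfree -count_split.
rewrite (eq_bigr _ (fun i _ => split_free r i x)) split_free big_split mulnDl mulnDr /=.
apply: f_equal2.
  apply: sum_iota_mul_eq => // i hi.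
  have hw : wordr r (B ++ oneL i :: T) by rewrite wordr_cat wordr_onefree //= hi wordr_onefree.
  have ew : e (B ++ oneL i :: T) = 1.
    by rewrite e_cat e_onefree // -[e (_ :: T)]/(1 + e T) e_onefree.
  have sw : s (B ++ oneL i :: T) = B ++ oneL 0 :: T.
    by rewrite s_cat (s_onefree hB) -[s (_ :: T)]/(oneL 0 :: s T) (s_onefree hT).
  by have := IH hw hx; rewrite ew sw addn1 expnSr !size_cat.
rewrite -[\sum_(i <- _) _ * _]big_distrl /= sum_eq_cut_one //.
case: eqP => [hsx|]; rewrite ?muln0 // !mul1n.
have hsize : size x = size (cut x n) + n.
  by move/(congr1 size): hsx; rewrite size_cat cut_s !size_s.
rewrite cut_s hsize expnD mulnA npaths_scaling ?wordr_take //.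
by rewrite size_cat /= -/n expnD mulnAC.
Qed.

Lemma nfree_scaling_onefree z x : onefree z -> wordr r x ->
  nfree r k.+1 z x * r ^ (size x + e z) = r ^ size z * nfree 1 k.+1 (s z) (s x).
Proof.
move=> hz hx; rewrite e_onefree // !nfree_onefree ?onefree_s // s_onefree //.
rewrite addn0 !npathsS !sum_down; move: (hz); rewrite /onefree => /negbTE ->.
rewrite !add0n big_distrl big_distrr /=.
apply: eq_big_seq => j; rewrite mem_iota hasNfind ?(negbT hz) // => /andP[_ hj].
rewrite big_seq1 set_nthE hj; under eq_bigr do rewrite set_nthE hj.
have hT : onefree (drop j.+1 z).
  by move: hz; rewrite -{1}(cat_take_drop j.+1 z) onefree_cat => /andP[].
have hB : onefree (take j z).
  by move: hz; rewrite -{1}(cat_take_drop j z) onefree_cat => /andP[].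
rewrite npaths_scaling_one_cons // size_cat /= size_take size_drop hj.
by congr (_ ^ _ * _); lia.
Qed.

Lemma free_scalingS : free_scaling r k.+1.
Proof.
move=> z x hz hx; have [hz1|hz1] := boolP (onefree z); first exact: nfree_scaling_onefree.
have hone : has is_one z by rewrite -[has _ _]negbK.
rewrite !nfreeS ?onefree_s // !sum_down has_one_s find_s del_one_s hone.
rewrite mulnDl mulnDr big_distrl big_distrr /=; congr (_ + _).
  have hw : wordr r (del_one z) by apply: wordr_down hz _; apply/downP; left.
  have := IH hw hx; rewrite e_del_one // size_del_one // => h.
  have he : 0 < e z by rewrite lt0n e_eq0.
  have hs : 0 < size z by move: hone; rewrite has_find; lia.
  by rewrite -(prednK he) -(prednK hs) addnS !expnS mulnCA h mulnA.
apply: eq_big_seq => j; rewrite mem_iota => /andP[_ hj]; rewrite big_seq1.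
apply: sum_iota_mul_eq => // i hi.
have hw : wordr r (set_nth two z j (oneL i)).
  by apply: wordr_down hz _; apply/downP; right; exists j, i.
have := IH hw hx.
by rewrite e_set_nth // size_set_nth_in ?ltn_find_size // set_nth_s addnS expnSr.
Qed.

End Step.

Lemma nfree_scaling k : free_scaling r k.
Proof. by elim: k => [|k]; [exact: free_scaling0 | exact: free_scalingS]. Qed.

End FreeScaling.

(** * Paths whose words do not all end alike *)

Definition nvarying r k z x :=
  count (fun p => (last [::] p == x) && ~~ same_end p) (paths r k z).
Definition nfree_same_end r k z x :=
  count (fun p => (last [::] p == x) && has onefree p && same_end p) (paths r k z).

Lemma last_one_split z : has is_one z -> exists B i T, z = B ++ oneL i :: T /\ onefree T.
Proof.
elim: z => [|a z IH] //=; case hz: (has is_one z) => ha.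
  by case: (IH hz) => B [i [T [-> hT]]]; exists (a :: B), i, T.
by case: a ha => [i|] //= _; exists [::], i, z; rewrite /onefree hz.
Qed.

Lemma avoid_onefree_same_end r k z p : p \in paths r k z -> ~~ has onefree p -> same_end p.
Proof.
move=> hp hp0; case/paths_head: (hp) => p' ep.
have hz : has is_one z by move: hp0; rewrite ep /= negb_or /onefree negbK => /andP[].
have [B [i [T [ez hT]]]] := last_one_split hz.
have hall : all (suffix (oneL i :: T)) p.
  by apply: (@avoid_onefree_suffix r k i B T p hT _ hp0); rewrite -ez.
have ends w : suffix (oneL i :: T) w -> ends_with (last two z) w.
  by case/suffixP => w' ->; rewrite /ends_with ez !last_cat /= eqxx andbT; case: w'.
rewrite ep /same_end; apply/andP; split; first by rewrite ez; case: B {ez}.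
by apply/allP => w hw; apply: ends; apply: (allP hall); rewrite ep.
Qed.

Lemma nfree_varying r k z x : nfree r k z x = nvarying r k z x + nfree_same_end r k z x.
Proof.
rewrite /nfree /nvarying (count_split _ same_end) addnC; congr (_ + _).
apply: eq_in_count => p hp /=; case hs: (same_end p); rewrite ?andbF //= !andbT.
case h0: (has onefree p); rewrite ?andbT //.
by rewrite (avoid_onefree_same_end hp) ?h0 in hs.
Qed.

Lemma ends_with_suffix a w : ends_with a w = suffix [:: a] w.
Proof.
case/lastP: w => [|w b] //; rewrite /ends_with last_rcons -cats1.
rewrite -[[:: a]]/([::] ++ [:: a]) suffix_catl // suffix0s eqseq_cons eqxx andbT.
by rewrite [b == a]eq_sym andbT; case: w.
Qed.

Lemma same_end_rcons Z a p : same_end (rcons Z a :: p) = all (suffix [:: a]) (rcons Z a :: p).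
Proof.
rewrite /same_end last_rcons (eq_all (ends_with_suffix a)).
by have -> : (rcons Z a != [::]) = true by case: Z.
Qed.

Lemma nfree_same_end_nil r k x : nfree_same_end r k [::] x = 0.
Proof. by apply: count_paths_nil => p; rewrite /= andbF. Qed.

Lemma nfree_same_end_rcons r k Z a x : nfree_same_end r k (rcons Z a) x =
  ((a == two) && (x == cut x 1 ++ [:: a])) * nfree r k Z (cut x 1).
Proof.
rewrite /nfree_same_end (eq_in_count (a2 := fun p =>
    all (suffix [:: a]) p && ((last [::] p == x) && has onefree p))); last first.
  by move=> p /paths_head [p' ->]; rewrite same_end_rcons andbC.
rewrite -cats1 count_paths_suffix /nfree -count_andl.
apply: eq_in_count => p /paths_head [p' ->].
have -> : has onefree (map (cat^~ [:: a]) (Z :: p')) = (a == two) && has onefree (Z :: p').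
  case: a => [i|]; last by rewrite andTb has_map; apply: eq_has => w /=; rewrite onefree_cat andbT.
  by rewrite andFb; apply/negbTE/hasPn => w /mapP [w' _ ->]; rewrite onefree_cat andbF.
rewrite /= (last_map (cat^~ _)) cat_eq_cut /=.
by case: (a == two); rewrite ?andbF //= andbA.
Qed.

Lemma nfree_same_end_scaling r k z x : 0 < r -> wordr r z -> wordr r x ->
  nfree_same_end r k z x * r ^ (size x + e z) = r ^ size z * nfree_same_end 1 k (s z) (s x).
Proof.
move=> hr hz hx; case/lastP: z hz => [|Z a] hz; first by rewrite !nfree_same_end_nil muln0.
rewrite [s _]map_rcons !nfree_same_end_rcons; case: a hz => [i|] hz; first by rewrite muln0.
have hc : (s x == cut (s x) 1 ++ [:: two]) = (x == cut x 1 ++ [:: two]).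
  rewrite !(eq_cut_cat _ [:: two]) size_s /s -map_drop -/(s _).
  by rewrite eq_sym eq_s_onefree // eq_sym.
rewrite /= -/(s Z) -/two hc cut_s; case: eqP => [hx1|]; rewrite ?muln0 // !mul1n.
have hsize : size x = size (cut x 1) + 1 by rewrite {1}hx1 size_cat.
have hZ : wordr r Z by move: hz; rewrite -cats1 wordr_cat => /andP[].
rewrite -cats1 e_cat addn0 hsize addnAC expnD mulnA (nfree_scaling hr) ?wordr_take //.
by rewrite size_cat expnD expn1 mulnAC.
Qed.

Lemma nvarying_scaling r k z x : 0 < r -> wordr r z -> wordr r x ->
  nvarying r k z x * r ^ (size x + e z) = r ^ size z * nvarying 1 k (s z) (s x).
Proof.
move=> hr hz hx; have := nfree_scaling hr k hz hx.
by rewrite !nfree_varying mulnDl mulnDr nfree_same_end_scaling //; apply: addIn.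
Qed.

Lemma d_nvarying r w v l :
  d r w v l = nvarying r (weight (cut v l) - weight (cut w l)) (cut v l) (cut w l).
Proof.
rewrite /d /nvarying -size_filter; set P := fun p => _.
set L := pathsk _ _ _ _; set M := paths _ _ _.
have hperm : perm_eq (undup [seq p <- L | P p]) [seq p <- M | P p].
  apply: uniq_perm; rewrite ?undup_uniq ?filter_uniq ?paths_uniq //.
  by move=> p; rewrite mem_undup !mem_filter pathsk_mem.
rewrite (perm_size hperm) !size_filter; apply: eq_in_count => p hp.
by rewrite /P (last_paths _ [::] hp).
Qed.

Lemma d_scaling r w v l : 0 < r -> wordr r w -> wordr r v ->
  d r w v l * r ^ (size (cut w l) + e (cut v l)) =
  r ^ size (cut v l) * d 1 (s w) (s v) l.
Proof.
move=> hr hw hv; rewrite !d_nvarying !cut_s !weight_s.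
exact: nvarying_scaling (wordr_take _ hv) (wordr_take _ hw).
Qed.

Lemma size_cut x l : size (cut x l) = size x - l.
Proof. by rewrite /cut size_takel ?leq_subr. Qed.

Lemma lcp_leq_size a b : lcp a b <= minn (size a) (size b).
Proof. by elim: a b => [|x a IH] [|y b] //=; case: eqP => // _; rewrite minnSS ltnS. Qed.

Local Open Scope ring_scope.

Lemma natr_eq_mul_exprz (N M r a b : nat) : (0 < r)%N -> (N * r ^ b = r ^ a * M)%N ->
  (N%:R : rat) = M%:R * r%:R ^ (a%:Z - b%:Z).
Proof.
move=> hr hNM; have hr0 : (r%:R : rat) != 0 by rewrite pnatr_eq0 -lt0n.
rewrite expfzDr // -exprnN -!exprnP; apply: (mulIf (expf_neq0 b hr0)).
by rewrite -!mulrA mulVf ?expf_neq0 // mulr1 -!natrX -!natrM hNM mulnC.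
Qed.

Theorem mainTheorem5 (r : nat) (w v : word) (l : nat) :
  (0 < r)%N -> wordr r w -> wordr r v -> (l <= h w v)%N ->
  ((d r w v l)%:R : rat) =
    (d 1 (s w) (s v) l)%:R *
    (r%:R : rat) ^ ((nletters v)%:Z - (nletters w)%:Z - (e (cut v l))%:Z).
Proof.
move=> hr hw hv hl.
have := leq_trans hl (lcp_leq_size _ _); rewrite !size_rev leq_min => /andP[hlw hlv].
have -> : (nletters v)%:Z - (nletters w)%:Z - (e (cut v l))%:Z =
    (size (cut v l))%:Z - (size (cut w l) + e (cut v l))%N%:Z.
  by rewrite /nletters !size_cut; lia.
exact: natr_eq_mul_exprz (d_scaling l hr hw hv).
Qed.
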